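(* The identities (A5) $x\wedge(y\wedge z)\approx (y\wedge x)\wedge z$, (J5') $x\approx (x'\wedge y)'\wedge(x'\wedge y')'$ form a 2-base for the variety $\mathbb{BA}$ of Boolean algebras (in the language $\langle\wedge,{}'\rangle$).
   Context: Algebras are of type $\langle \wedge, {}'\rangle$ with $\wedge$ binary and ${}'$ unary. The variety $\mathbb{BA}$ of Boolean algebras in this language consists of the algebras $\langle B,\wedge,{}'\rangle$ obtained from Boolean algebras by keeping only meet and complement (equivalently, the variety generated by the two-element Boolean algebra with meet and complement). A base for a variety is an independent set of identities (no identity in the set follows from the others) that defines the variety; an $n$-base is a base with exactly $n$ identities. *)

Set Implicit Arguments.

(* An algebra of type </\, '> (binary meet, unary complement).
   Algebras are nonempty, as usual in universal algebra. *)
Record malg := MAlg {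
  carrier :> Type;
  mt : carrier -> carrier -> carrier;
  cp : carrier -> carrier;
  witness : carrier
}.

Definition satA5 (A : malg) : Prop :=
  forall x y z : A, @mt A x (@mt A y z) = @mt A (@mt A y x) z.

Definition satJ5' (A : malg) : Prop :=
  forall x y : A, x = @mt A (@cp A (@mt A (@cp A x) y)) (@cp A (@mt A (@cp A x) (@cp A y))).

Definition is_boolean_algebra (B : Type) (meet join : B -> B -> B)
  (compl : B -> B) (bot top : B) : Prop :=
  (forall x y, meet x y = meet y x) /\
  (forall x y, join x y = join y x) /\
  (forall x y z, meet x (meet y z) = meet (meet x y) z) /\
  (forall x y z, join x (join y z) = join (join x y) z) /\
  (forall x y, meet x (join x y) = x) /\
  (forall x y, join x (meet x y) = x) /\
  (forall x y z, meet x (join y z) = join (meet x y) (meet x z)) /\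
  (forall x, meet x bot = bot) /\
  (forall x, join x top = top) /\
  (forall x, meet x (compl x) = bot) /\
  (forall x, join x (compl x) = top).

Definition in_BA (A : malg) : Prop :=
  exists (join : A -> A -> A) (bot top : A),
    is_boolean_algebra (@mt A) join (@cp A) bot top.

From Stdlib Require Import Setoid.

(* A5 alone makes w ∧ c commute with c; J5' writes every x′ ∧ y in this form
   and factors x as (x′ ∧ y)′ ∧ (x′ ∧ y′)′ with both factors commuting with x.
   Playing these factorizations against each other gives commutativity, after
   which A5 is associativity and J5' is the meet-dual of Huntington's axiom.
   Huntington's argument then yields x′′ = x, a constant x ∧ x′ absorbing
   everything, idempotence, and distributivity over the De Morgan join
   (x′ ∧ y′)′.  Conversely every Boolean algebra satisfies A5 and J5', and the
   two-element algebras with identity complement and x ∧ y = x, resp.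
   x ∧ y = 1, separate the two identities. *)

Section BooleanAlgebraIdentities.

Variables (B : Type) (meet join : B -> B -> B) (compl : B -> B) (bot top : B).
Hypotheses (meetC : forall x y, meet x y = meet y x)
           (joinC : forall x y, join x y = join y x)
           (meetA : forall x y z, meet x (meet y z) = meet (meet x y) z)
           (joinA : forall x y z, join x (join y z) = join (join x y) z)
           (meet_absorb : forall x y, meet x (join x y) = x)
           (join_absorb : forall x y, join x (meet x y) = x)
           (meet_distr : forall x y z, meet x (join y z) = join (meet x y) (meet x z))
           (meet_botr : forall x, meet x bot = bot)
           (join_topr : forall x, join x top = top)
           (meet_compl : forall x, meet x (compl x) = bot)
           (join_compl : forall x, join x (compl x) = top).

Lemma join_distr x y z : join x (meet y z) = meet (join x y) (join x z).
Proof.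
  symmetry.
  rewrite meet_distr, (meetC (join x y) x), meet_absorb, (meetC (join x y) z).
  rewrite meet_distr, joinA, (meetC z x), join_absorb, (meetC z y); reflexivity.
Qed.

Lemma join_botr x : join x bot = x.
Proof. rewrite <- (meet_botr x); apply join_absorb. Qed.

Lemma meet_topr x : meet x top = x.
Proof. rewrite <- (join_topr x); apply meet_absorb. Qed.

Lemma compl_unique x y : meet x y = bot -> join x y = top -> y = compl x.
Proof.
  intros hm hj.
  assert (hy : y = meet y (compl x)).
  { rewrite <- (meet_topr y) at 1.
    rewrite <- (join_compl x), meet_distr, (meetC y x), hm, joinC; apply join_botr. }
  assert (hx : compl x = meet (compl x) y).
  { rewrite <- (meet_topr (compl x)) at 1.
    rewrite <- hj, meet_distr, (meetC (compl x) x), meet_compl, joinC.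
    apply join_botr. }
  rewrite hy, meetC; symmetry; exact hx.
Qed.

Lemma complK x : compl (compl x) = x.
Proof.
  symmetry; apply compl_unique.
  - rewrite meetC; apply meet_compl.
  - rewrite joinC; apply join_compl.
Qed.

Lemma compl_meet x y : compl (meet x y) = join (compl x) (compl y).
Proof.
  symmetry; apply compl_unique.
  - rewrite meet_distr, (meetC x y) at 1.
    rewrite <- !meetA, !meet_compl, !meet_botr; apply join_botr.
  - rewrite joinC, join_distr, (joinC _ x), joinA, join_compl, (joinC top), join_topr.
    rewrite (joinC (compl x)), (joinC _ y), joinA, join_compl, (joinC top), join_topr.
    apply meet_topr.
Qed.

Lemma boolean_A5 x y z : meet x (meet y z) = meet (meet y x) z.
Proof. rewrite meetA, (meetC x y); reflexivity. Qed.

Lemma boolean_J5' x y :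
  x = meet (compl (meet (compl x) y)) (compl (meet (compl x) (compl y))).
Proof.
  rewrite !compl_meet, !complK, <- join_distr, (meetC (compl y) y), meet_compl.
  symmetry; apply join_botr.
Qed.

End BooleanAlgebraIdentities.

Lemma in_BA_A5_J5' (A : malg) : in_BA A -> satA5 A /\ satJ5' A.
Proof.
  intros (join & bot & top & hB).
  destruct hB as (meetC & joinC & meetA & joinA & meet_absorb & join_absorb
                  & meet_distr & meet_botr & join_topr & meet_compl & join_compl).
  split; intros ?; [apply boolean_A5 | eapply boolean_J5']; eassumption.
Qed.

Notation "x ∧ y" := (@mt _ x y) (at level 40, left associativity).
Notation "x ′" := (@cp _ x) (at level 5, left associativity, format "x ′").

Section CommutativityFromA5.

Variable A : malg.
Hypothesis hA5 : satA5 A.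
Hypothesis hJ : satJ5' A.
Implicit Types a b x y z : A.

Lemma meet_swap a b z : (a ∧ b) ∧ z = b ∧ (a ∧ z).
Proof. symmetry; apply hA5. Qed.

Lemma commute_meet_r a z : z ∧ (a ∧ z) = (a ∧ z) ∧ z.
Proof. apply hA5. Qed.

Lemma meet_split x y z : x ∧ z = (x′ ∧ y′)′ ∧ ((x′ ∧ y)′ ∧ z).
Proof. rewrite (hJ x y) at 1; apply meet_swap. Qed.

Lemma cpl_meet_factor x y : x′ ∧ y = ((x′ ∧ y)′ ∧ (x′ ∧ y′))′ ∧ x′.
Proof. rewrite (hJ (x′ ∧ y) (x′ ∧ y′)) at 1; rewrite <- (hJ x y); reflexivity. Qed.

Lemma cpl_meet_cpl x y : x′ ∧ (x′ ∧ y) = y ∧ (x′ ∧ x′).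
Proof.
  rewrite <- (meet_swap x′ y x′), (cpl_meet_factor x y).
  apply commute_meet_r.
Qed.

Lemma meet_left_comm_cpl_sq a b x :
  a ∧ (b ∧ (x′ ∧ x′)) = b ∧ (a ∧ (x′ ∧ x′)).
Proof.
  transitivity (x′ ∧ (x′ ∧ (b ∧ a))).
  - rewrite (hA5 a b); symmetry; apply cpl_meet_cpl.
  - rewrite (hA5 x′ x′), (hA5 (x′ ∧ x′) b), <- cpl_meet_cpl.
    rewrite <- (hA5 (x′ ∧ b) x′ a), <- (hA5 b x′), cpl_meet_cpl; reflexivity.
Qed.

Lemma commute_cpl_meet_cpl x y : (x′ ∧ y′)′ ∧ x = x ∧ (x′ ∧ y′)′.
Proof.
  pose proof (commute_meet_r (x′ ∧ y)′ (x′ ∧ y′)′) as h.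
  rewrite <- (hJ x y) in h; exact h.
Qed.

Lemma commute_cpl_meet x y : (x′ ∧ y)′ ∧ x = x ∧ (x′ ∧ y)′.
Proof.
  rewrite (hJ (x′ ∧ y) (x′ ∧ y′)′); rewrite <- (hJ x y).
  apply commute_cpl_meet_cpl.
Qed.

Lemma meet_shift x y a : a ∧ (x ∧ (x′ ∧ y)′) = x ∧ ((x′ ∧ y)′ ∧ a).
Proof.
  rewrite (meet_split x y (x′ ∧ y)′), (meet_split x y ((x′ ∧ y)′ ∧ a)).
  rewrite meet_left_comm_cpl_sq, cpl_meet_cpl; reflexivity.
Qed.

Lemma meet_comm x y : x ∧ y = y ∧ x.
Proof.
  (* [y] factors through [(x′ ∧ (y′ ∧ y′))′], which commutes with [x]. *)
  assert (hy : y = (x′ ∧ (y′ ∧ y′))′ ∧ (y′ ∧ (y′ ∧ x′)′)′).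
  { rewrite (hJ y (y′ ∧ x′)) at 1; rewrite cpl_meet_cpl; reflexivity. }
  rewrite (meet_split y (y′ ∧ x′) x), cpl_meet_cpl.
  rewrite hy at 1; rewrite <- meet_shift, commute_cpl_meet; reflexivity.
Qed.

End CommutativityFromA5.

Definition join {A : malg} (x y : A) : A := (x′ ∧ y′)′.

Section Huntington.

Variable A : malg.
Hypothesis meetC : forall x y : A, x ∧ y = y ∧ x.
Hypothesis meetA : forall x y z : A, x ∧ (y ∧ z) = x ∧ y ∧ z.
Hypothesis hJ : satJ5' A.
Implicit Types x y z : A.

Lemma meet_cpl_meet_cpl2 x y : x ∧ (x′ ∧ y)′ = x ∧ (x′ ∧ y′′)′.
Proof.
  transitivity ((x′ ∧ y)′ ∧ ((x′ ∧ y′)′ ∧ (x′ ∧ y′′)′)).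
  - rewrite <- (hJ x y′); apply meetC.
  - rewrite meetA, <- (hJ x y); reflexivity.
Qed.

Lemma meet_cpl_r x y : x ∧ y′ = x ∧ (x′ ∧ y)′ ∧ (y′′ ∧ x)′.
Proof.
  rewrite (hJ y′ x) at 1.
  rewrite (meetC (y′′ ∧ x)′), meetA, (meetC y′′ x′), <- meet_cpl_meet_cpl2.
  reflexivity.
Qed.

Lemma meet_cpl_sym x : x ∧ x′ = x′ ∧ x′′.
Proof.
  transitivity (x′ ∧ ((x′ ∧ x′′)′ ∧ (x′ ∧ x′′′)′)).
  - rewrite <- (hJ x x′′); apply meetC.
  - symmetry; rewrite (meet_cpl_r x′ x′) at 1.
    rewrite (meetC x′′ x′), (meetC x′′′ x′); symmetry; apply meetA.
Qed.

Lemma cpl_as_meet x : x′ = (x ∧ x′)′ ∧ (x ∧ x′′)′.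
Proof.
  rewrite (hJ x′ x) at 1.
  rewrite (meetC x′′ x), (meetC x′′ x′), <- meet_cpl_sym; apply meetC.
Qed.

Lemma cplK x : x′′ = x.
Proof. rewrite (cpl_as_meet x′); symmetry; apply hJ. Qed.

Lemma cpl_split x y : x′ = (x ∧ y)′ ∧ (x ∧ y′)′.
Proof. rewrite (hJ x′ y), cplK; reflexivity. Qed.

Lemma meet_cpl_meet_sym x y : y ∧ (x′ ∧ y)′ = x ∧ (y′ ∧ x)′.
Proof.
  transitivity ((y′ ∧ x)′ ∧ ((x′ ∧ y)′ ∧ (x′ ∧ y′)′)).
  - rewrite (hJ y x) at 1.
    rewrite <- meetA, (meetC (y′ ∧ x′)′), (meetC y′ x′); reflexivity.
  - rewrite <- (hJ x y); apply meetC.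
Qed.

Lemma meet_cpl_const x y : x ∧ x′ = y ∧ y′.
Proof.
  transitivity ((x ∧ y)′ ∧ (y ∧ (x′ ∧ y)′)).
  - rewrite meet_cpl_meet_sym, (cpl_split x y).
    rewrite meetA, (meetC x (x ∧ y)′), <- meetA, (meetC y′ x); reflexivity.
  - rewrite (cpl_split y x), (meetC y x), (meetC y x′), meetA.
    rewrite (meetC (x ∧ y)′ y), <- meetA; reflexivity.
Qed.

Lemma meet_meet_cpl x : x ∧ (x ∧ x′) = x ∧ x′.
Proof.
  rewrite meetA, (cpl_split x x) at 1.
  rewrite meetA, (meet_cpl_const (x ∧ x) x); apply meet_cpl_const.
Qed.

Lemma meet_cpl_absorb x y : x ∧ x′ ∧ y = x ∧ x′.
Proof. rewrite (meet_cpl_const x y), meetC; apply meet_meet_cpl. Qed.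

Lemma meet_as_cpl x y : x ∧ y = x ∧ ((x ∧ y)′ ∧ (x ∧ y′))′.
Proof.
  rewrite (hJ (x ∧ y) (x ∧ y′)) at 1.
  rewrite <- (cpl_split x y), cplK; apply meetC.
Qed.

Lemma meet_top x y : y ∧ (x ∧ x′)′ = y.
Proof.
  assert (top_idem : (x ∧ x′)′ ∧ (x ∧ x′)′ = (x ∧ x′)′).
  { rewrite (hJ (x ∧ x′)′ x) at 3.
    rewrite cplK, !meet_cpl_absorb; reflexivity. }
  rewrite (hJ y (x ∧ x′)′).
  rewrite cplK, (meetC y′ (x ∧ x′)), meet_cpl_absorb, <- meetA, top_idem.
  reflexivity.
Qed.

Lemma meet_idem x : x ∧ x = x.
Proof.
  rewrite meet_as_cpl, (meetC (x ∧ x)′), meet_cpl_absorb; apply meet_top.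
Qed.

Lemma join_comm x y : join x y = join y x.
Proof. unfold join; rewrite meetC; reflexivity. Qed.

Lemma join_assoc x y z : join x (join y z) = join (join x y) z.
Proof. unfold join; rewrite !cplK, meetA; reflexivity. Qed.

Lemma meet_join_absorb x y : x ∧ join x y = x.
Proof.
  unfold join; rewrite (hJ x y) at 1.
  rewrite <- meetA, meet_idem; symmetry; apply hJ.
Qed.

Lemma join_meet_absorb x y : join x (x ∧ y) = x.
Proof.
  pose proof (meet_join_absorb x′ y′) as h; unfold join in *.
  rewrite !cplK in h; rewrite h; apply cplK.
Qed.

Lemma join_bot x y : join x (y ∧ y′) = x.
Proof. unfold join; rewrite meet_top; apply cplK. Qed.

Lemma join_meet_cpl x y : join (x ∧ y) (x ∧ y′) = x.
Proof. unfold join; rewrite <- cpl_split; apply cplK. Qed.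

Lemma cpl_meet_join y z : y′ ∧ join y z = y′ ∧ z.
Proof.
  rewrite <- (join_meet_cpl (y′ ∧ join y z) z).
  assert (h : y′ ∧ join y z ∧ z′ = (y′ ∧ z′) ∧ (y′ ∧ z′)′).
  { unfold join; rewrite <- meetA, (meetC _ z′), !meetA; reflexivity. }
  rewrite h, join_bot, <- meetA, (meetC (join y z)), join_comm, meet_join_absorb.
  reflexivity.
Qed.

Lemma meet_join_distr x y z : x ∧ join y z = join (x ∧ y) (x ∧ z).
Proof.
  rewrite <- (join_meet_cpl (x ∧ join y z) y), <- (join_meet_cpl (x ∧ z) y).
  rewrite <- !meetA, (meetC (join y z)), meet_join_absorb.
  rewrite (meetC (join y z)), cpl_meet_join, join_assoc, (meetC z y).
  rewrite (meetA x y z), join_meet_absorb, (meetC z y′); reflexivity.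
Qed.

Lemma huntington_in_BA : in_BA A.
Proof.
  pose (w := witness A).
  exists join, (w ∧ w′), (w ∧ w′)′.
  repeat split.
  - exact meetC.
  - exact join_comm.
  - exact meetA.
  - exact join_assoc.
  - exact meet_join_absorb.
  - exact join_meet_absorb.
  - exact meet_join_distr.
  - intros x; rewrite meetC; apply meet_cpl_absorb.
  - intros x; unfold join; rewrite cplK, meetC, meet_cpl_absorb; reflexivity.
  - intros x; apply meet_cpl_const.
  - intros x; unfold join; rewrite cplK, (meetC x′ x), (meet_cpl_const x w).
    reflexivity.
Qed.

End Huntington.

Lemma A5_J5'_in_BA (A : malg) : satA5 A -> satJ5' A -> in_BA A.
Proof.
  intros hA5 hJ; apply huntington_in_BA; [| | exact hJ].
  - exact (meet_comm _ hA5 hJ).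
  - intros x y z; rewrite hA5, (meet_comm _ hA5 hJ y x); reflexivity.
Qed.

Definition left_proj_alg : malg := @MAlg bool (fun x _ => x) (fun x => x) true.
Definition const_alg : malg := @MAlg bool (fun _ _ => true) (fun x => x) true.

Theorem theorem6p1 :
  (* {A5, J5'} defines BA *)
  (forall A : malg, (satA5 A /\ satJ5' A) <-> in_BA A) /\
  (* independence: J5' does not imply A5 *)
  (exists A : malg, satJ5' A /\ ~ satA5 A) /\
  (* independence: A5 does not imply J5' *)
  (exists A : malg, satA5 A /\ ~ satJ5' A).
Proof.
  split; [| split].
  - intros A; split.
    + intros [hA5 hJ]; exact (A5_J5'_in_BA A hA5 hJ).
    + apply in_BA_A5_J5'.
  - exists left_proj_alg; split.
    + intros x y; reflexivity.
    + intros h; discriminate (h true false true).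
  - exists const_alg; split.
    + intros x y z; reflexivity.
    + intros h; discriminate (h false false).
Qed.
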